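(* Let $\mathcal C_1,\dots,\mathcal C_m\subset\mathbb{R}^P$ be compact convex sets each containing the origin as an interior point, and $G_i=\gamma_{\mathcal C_i}$ their gauges. For each $i$ let $L_{2,i}>0$ be a constant such that $\|\mathrm{Prox}_{tG_i}(y)-\mathrm{Prox}_{t'G_i}(y)\|\le L_{2,i}|t-t'|$ for all $t,t'>0$ and all $y\in\mathbb{R}^P$. Then for any $\theta,\theta'\in\,]0,+\infty[^m$ and any $y\in\mathbb{R}^P$, $$\big\|\mathrm{Prox}_{\theta_1G_1}\circ\cdots\circ\mathrm{Prox}_{\theta_mG_m}(y)-\mathrm{Prox}_{\theta'_1G_1}\circ\cdots\circ\mathrm{Prox}_{\theta'_mG_m}(y)\big\|\le\sqrt m\,\max_iL_{2,i}\,\|\theta-\theta'\|.$$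
   Context: The gauge of a non-empty closed convex set $\mathcal C$ containing the origin is $\gamma_{\mathcal C}(y)=\inf\{\omega>0: y\in\omega\mathcal C\}$. $\mathrm{Prox}_{G}(y)=\operatorname{argmin}_z\frac12\|z-y\|^2+G(z)$. Such constants $L_{2,i}$ exist for gauges of compact convex sets with the origin in their interior. *)

From HB Require Import structures.
From mathcomp Require Import all_boot all_order all_algebra.
From mathcomp Require Import all_classical all_reals all_analysis.
Set Implicit Arguments. Unset Strict Implicit. Unset Printing Implicit Defensive.
Import Order.TTheory GRing.Theory Num.Theory.
Import numFieldNormedType.Exports.
Local Open Scope classical_set_scope.
Local Open Scope ring_scope.

Definition enorm {R : realType} {n : nat} (v : 'rV[R]_n) : R :=
  Num.sqrt (\sum_(i < n) v ord0 i ^+ 2).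

Definition convex_set_of {R : realType} {n : nat} (C : set 'rV[R]_n) : Prop :=
  forall x y (l : R), C x -> C y -> 0 <= l -> l <= 1 -> C (l *: x + (1 - l) *: y).

Definition gauge {R : realType} {n : nat} (C : set 'rV[R]_n) (y : 'rV[R]_n) : R :=
  inf [set w : R | 0 < w /\ exists c, C c /\ y = w *: c].

Definition prox {R : realType} {n : nat} (G : 'rV[R]_n -> R) (y : 'rV[R]_n) : 'rV[R]_n :=
  xget 0 [set z | forall w, 2^-1 * enorm (z - y) ^+ 2 + G z <= 2^-1 * enorm (w - y) ^+ 2 + G w].

(* Prox_{th_0 G_0} o ... o Prox_{th_(m-1) G_(m-1)} (y) *)
Definition comp_prox {R : realType} {n m : nat} (G : 'I_m -> 'rV[R]_n -> R)
  (th : 'I_m -> R) (y : 'rV[R]_n) : 'rV[R]_n :=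
  foldr (fun i acc => prox (fun z => th i * G i z) acc) y (enum 'I_m).

(* Each proximity operator of a convex function, here of [t * gauge C], which is
   convex, nonnegative and Lipschitz because [C] is convex with [0] in its
   interior, is nonexpansive: adding the variational inequalities satisfied by
   two minimisers bounds their distance by that of the data.  Changing the
   parameters [th i] into [th' i] one operator at a time, the error created at
   step [i] is at most [L i * |th i - th' i|] and is not amplified by the later,
   nonexpansive, operators; summing and applying Cauchy-Schwarz gives the bound. *)

From HB Require Import structures.
From mathcomp Require Import all_boot all_order all_algebra.
From mathcomp Require Import all_classical all_reals all_analysis.
From mathcomp Require Import ring lra.
Set Implicit Arguments.
Unset Strict Implicit.
Unset Printing Implicit Defensive.

Import Order.TTheory GRing.Theory Num.Theory.
Import numFieldNormedType.Exports.
Local Open Scope classical_set_scope.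
Local Open Scope ring_scope.

Section EuclideanNorm.
Context {R : realType} {n : nat}.
Implicit Types a b v : 'rV[R]_n.

Definition enorm2 v := \sum_(i < n) v ord0 i ^+ 2.
Definition edot a b := \sum_(i < n) a ord0 i * b ord0 i.

Lemma enorm2_ge0 v : 0 <= enorm2 v.
Proof. by apply: sumr_ge0 => i _; rewrite sqr_ge0. Qed.

Lemma sqr_enorm v : enorm v ^+ 2 = enorm2 v.
Proof. by rewrite sqr_sqrtr // enorm2_ge0. Qed.

Lemma enorm_ge0 v : 0 <= enorm v.
Proof. exact: sqrtr_ge0. Qed.

Lemma enorm0 : enorm (0 : 'rV[R]_n) = 0.
Proof.
by rewrite /enorm big1 ?sqrtr0 // => i _; rewrite mxE expr0n.
Qed.

Lemma sqr_coord_le_enorm2 v i : v ord0 i ^+ 2 <= enorm2 v.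
Proof.
by rewrite /enorm2 (bigD1 i) //= lerDl; apply: sumr_ge0 => j _; rewrite sqr_ge0.
Qed.

Lemma enorm_eq0_edot a b : enorm a = 0 -> edot a b = 0.
Proof.
move=> a0; rewrite /edot big1 // => i _.
suff -> : a ord0 i = 0 by rewrite mul0r.
apply/eqP; rewrite -sqrf_eq0 eq_le sqr_ge0 andbT.
by rewrite (le_trans (sqr_coord_le_enorm2 a i)) // -sqr_enorm a0 expr0n.
Qed.

Lemma edotC a b : edot a b = edot b a.
Proof. by apply: eq_bigr => i _; rewrite mulrC. Qed.

Lemma edotZr a b s : edot a (s *: b) = s * edot a b.
Proof. by rewrite /edot mulr_sumr; apply: eq_bigr => i _; rewrite mxE; ring. Qed.

Lemma enorm2Z b s : enorm2 (s *: b) = s ^+ 2 * enorm2 b.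
Proof. by rewrite /enorm2 mulr_sumr; apply: eq_bigr => i _; rewrite mxE; ring. Qed.

Lemma enorm2D a b : enorm2 (a + b) = enorm2 a + 2 * edot a b + enorm2 b.
Proof.
rewrite /enorm2 /edot mulr_sumr -!big_split /=.
by apply: eq_bigr => i _; rewrite mxE; ring.
Qed.

Lemma edot_le_enormM a b : edot a b <= enorm a * enorm b.
Proof.
set u := enorm a; set v := enorm b.
have [u0|u0] := eqVneq u 0; first by rewrite enorm_eq0_edot // u0 mul0r.
have [v0|v0] := eqVneq v 0; first by rewrite edotC enorm_eq0_edot // v0 mulr0.
have uv_gt0 : 0 < u * v by rewrite mulr_gt0 // lt0r ?u0 ?v0 enorm_ge0.
(* expanding [0 <= |v a - u b|^2] gives [0 <= 2 u v (u v - <a, b>)] *)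
have : 0 <= enorm2 (v *: a - u *: b) by exact: enorm2_ge0.
have -> : enorm2 (v *: a - u *: b) = 2 * (u * v) * (u * v - edot a b).
  rewrite -scaleNr enorm2D !enorm2Z edotZr edotC edotZr -!sqr_enorm -/u -/v.
  by rewrite [edot b a]edotC; ring.
by rewrite pmulr_rge0 ?subr_ge0 // mulr_gt0.
Qed.

Lemma ler_enormD a b : enorm (a + b) <= enorm a + enorm b.
Proof.
rewrite -(ler_pXn2r (n := 2)) ?nnegrE ?addr_ge0 ?enorm_ge0 //.
rewrite sqrrD !sqr_enorm enorm2D lerD2r lerD2l mulr2n mulrDl mul1r.
by rewrite lerD // edot_le_enormM.
Qed.

Lemma enorm2_continuous (y : 'rV[R]_n) :
  continuous (fun z : 'rV[R]_n => enorm2 (z - y)).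
Proof.
apply: (@continuous_big R _ +%R 0 xpredT add_continuous) => i _ x.
pose d (z : 'rV[R]_n) := z ord0 i - y ord0 i.
have d_cont : {for x, continuous d}.
  by apply: continuousB; [apply: coord_continuous | apply: cst_continuous].
have -> : (fun z => (z - y) ord0 i ^+ 2) = d \* d.
  by apply/funext => z; rewrite /d /= !mxE expr2.
exact: continuousM.
Qed.

End EuclideanNorm.

Lemma lipschitz_continuous (R : realType) n (f : 'rV[R]_n -> R) (k : R) :
  0 < k -> (forall a b, `|f a - f b| <= k * `|a - b|) -> continuous f.
Proof.
move=> k_gt0 f_lip x; apply/(@cvgrPdist_lt _ _ _ _ (nbhs_filter x)) => e e_gt0.
have : \forall z \near x, `|x - z| < e / k.
  by apply/nbhs_normP; exists (e / k) => //=; rewrite divr_gt0.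
apply: filterS => z xz.
by rewrite (le_lt_trans (f_lip x z)) // mulrC -ltr_pdivlMr.
Qed.

Definition prox_obj (R : realType) n (G : 'rV[R]_n -> R) (y z : 'rV[R]_n) : R :=
  2^-1 * enorm (z - y) ^+ 2 + G z.

Section ProxExists.
Context {R : realType} {n : nat} (G : 'rV[R]_n -> R).
Hypothesis G_cont : continuous G.
Hypothesis G_ge0 : forall z, 0 <= G z.

Lemma prox_obj_continuous y : continuous (prox_obj G y).
Proof.
have -> : prox_obj G y = cst 2^-1 \* (fun z => enorm2 (z - y)) + G.
  by apply/funext => z; rewrite /prox_obj sqr_enorm.
move=> x; apply: continuousD; last exact: G_cont.
by apply: continuousM; [exact: cst_continuous | exact: enorm2_continuous].
Qed.

(* Minimise over the box of half-width [G y + 1] around [y]: outside it the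
   quadratic term alone exceeds [prox_obj G y y = G y]. *)
Lemma prox_obj_has_min y : exists p, forall w, prox_obj G y p <= prox_obj G y w.
Proof.
set rho := G y + 1.
have rho_ge0 : 0 <= rho by rewrite addr_ge0.
pose K := [set v : 'rV[R]_n | forall i, `|v ord0 i - y ord0 i| <= rho].
have K_compact : compact K.
  apply: (@rV_compact _ _ (fun i => [set x | `|x - y ord0 i| <= rho])) => i.
  have -> : [set x | `|x - y ord0 i| <= rho] = `[y ord0 i - rho, y ord0 i + rho]%classic.
    by apply/seteqP; split => x; rewrite /= in_itv /= ler_distl.
  exact: segment_compact.
have Ky : K y by move=> i; rewrite subrr normr0.
have [c Kc c_min] := compact_EVT_min (ex_intro _ y Ky) K_compact
  (continuous_subspaceT (prox_obj_continuous (y := y))).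
exists c => w; have [Kw|/existsNP[i /negP]] := pselect (K w).
  by apply: c_min; rewrite inE.
rewrite -ltNge => rho_lt; apply: (le_trans (c_min y _)); first by rewrite inE.
have := sqr_coord_le_enorm2 (w - y) i; rewrite !mxE -(real_normK (num_real _)).
have := G_ge0 w; have := normr_ge0 (w ord0 i - y ord0 i).
rewrite /prox_obj subrr enorm0 expr0n mulr0 add0r sqr_enorm.
move: rho_lt; rewrite /rho; nra.
Qed.

End ProxExists.

Lemma ler_of_small_perturbation (R : realType) (a b c : R) : 0 <= c ->
  (forall s, 0 < s -> s <= 1 -> a <= b + s * c) -> a <= b.
Proof.
move=> c_ge0 h; apply/ler_addgt0Pr => e e_gt0.
set s := e / (e + c + 1).
have s_gt0 : 0 < s by rewrite divr_gt0 //; lra.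
have s_le1 : s <= 1 by rewrite ler_pdivrMr ?mul1r; lra.
have sc_le : s * c <= e by rewrite mulrAC ler_pdivrMr; nra.
have := h s s_gt0 s_le1; lra.
Qed.

Section ProxConvex.
Context {R : realType} {n : nat} (G : 'rV[R]_n -> R).
Hypothesis G_convex : forall p w (s : R), 0 <= s -> s <= 1 ->
  G ((1 - s) *: p + s *: w) <= (1 - s) * G p + s * G w.
Hypothesis G_has_min : forall y, exists p, forall w, prox_obj G y p <= prox_obj G y w.

Lemma prox_is_min y w : prox_obj G y (prox G y) <= prox_obj G y w.
Proof. exact: (xgetPex 0 (G_has_min y)). Qed.

Lemma prox_variational y p : (forall w, prox_obj G y p <= prox_obj G y w) ->
  forall w, - edot (p - y) (w - p) <= G w - G p.
Proof.
move=> p_min w; apply: (@ler_of_small_perturbation _ _ _ (2^-1 * enorm2 (w - p))).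
  by rewrite mulr_ge0 ?invr_ge0 // enorm2_ge0.
move=> s s_gt0 s_le1.
have obj_le := p_min ((1 - s) *: p + s *: w).
have G_le := G_convex p w (ltW s_gt0) s_le1.
have shift : (1 - s) *: p + s *: w - y = (p - y) + s *: (w - p).
  by apply/rowP => i; rewrite !mxE; ring.
rewrite /prox_obj shift !sqr_enorm [enorm2 (_ + s *: _)]enorm2D edotZr enorm2Z in obj_le.
have : 0 <= s * (edot (p - y) (w - p) + s * (2^-1 * enorm2 (w - p)) + G w - G p).
  rewrite (_ : s * _ = s * edot (p - y) (w - p) + 2^-1 * (s ^+ 2 * enorm2 (w - p))
    + ((1 - s) * G p + s * G w) - G p); last by ring.
  lra.
by rewrite pmulr_rge0 //; clear obj_le G_le; lra.
Qed.

(* Adding the two variational inequalities at [p1] and [p2] gives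
   [|y1 - y2|^2 >= |p1 - p2|^2 + |(y1 - y2) - (p1 - p2)|^2]. *)
Lemma prox_nonexpansive y1 y2 : enorm (prox G y1 - prox G y2) <= enorm (y1 - y2).
Proof.
have := prox_variational (prox_is_min y1) (prox G y2).
have := prox_variational (prox_is_min y2) (prox G y1).
move: (prox G y1) (prox G y2) => p1 p2 V2 V1.
have decomp : enorm2 (y1 - y2) = enorm2 (p1 - p2) + enorm2 ((y1 - y2) - (p1 - p2))
    + 2 * edot (p1 - y1) (p2 - p1) + 2 * edot (p2 - y2) (p1 - p2).
  rewrite /enorm2 /edot !mulr_sumr -!big_split /=; apply: eq_bigr => i _.
  by rewrite !mxE; move: (y1 ord0 i) (y2 ord0 i) (p1 ord0 i) (p2 ord0 i) => *; ring.
rewrite /enorm ler_sqrt ?enorm2_ge0 // -/(enorm2 _) -/(enorm2 _) decomp.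
rewrite -!addrA lerDl addr_ge0 ?enorm2_ge0 // -mulrDr pmulr_rge0 //.
by have := lerD V1 V2; rewrite addrA subrK subrr -opprD oppr_le0.
Qed.

End ProxConvex.

Section Gauge.
Context {R : realType} {n : nat} (C : set 'rV[R]_n).
Hypothesis C_convex : convex_set_of C.
Variable r : R.
Hypothesis r_gt0 : 0 < r.
Hypothesis C_ball : forall x, `|x| < r -> C x.

Let gauge_set (a : 'rV[R]_n) := [set w : R | 0 < w /\ exists c, C c /\ a = w *: c].

Lemma gauge_setP a w : 0 < w -> `|a| < r * w -> gauge_set a w.
Proof.
move=> w_gt0 aw; split => //; exists (w^-1 *: a); split.
  by apply: C_ball; rewrite normrZ gtr0_norm ?invr_gt0 // mulrC ltr_pdivrMr // mulrC.
by rewrite scalerA divff ?scale1r // gt_eqF.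
Qed.

Lemma has_inf_gauge_set a : has_inf (gauge_set a).
Proof.
split; last by exists 0 => w [/ltW].
exists (`|a| / r + 1); apply: gauge_setP.
  by rewrite ltr_wpDl // divr_ge0 // ltW.
by rewrite mulrDr mulr1 mulrC divfK ?gt_eqF // ltrDl.
Qed.

Lemma gauge_ge0 a : 0 <= gauge C a.
Proof.
by apply: lb_le_inf; [case: (has_inf_gauge_set a) | move=> w [/ltW]].
Qed.

Lemma gauge_le a w : gauge_set a w -> gauge C a <= w.
Proof. exact: (ge_inf (proj2 (has_inf_gauge_set a))). Qed.

Lemma gauge_le_norm a : gauge C a <= `|a| / r.
Proof.
apply/ler_addgt0Pr => e e_gt0; apply: gauge_le; apply: gauge_setP.
  by rewrite ltr_wpDl // divr_ge0 // ltW.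
by rewrite mulrDr mulrC divfK ?gt_eqF // ltrDl mulr_gt0.
Qed.

Lemma gauge0 : gauge C 0 = 0.
Proof.
by apply/le_anti; rewrite gauge_ge0 andbT (le_trans (gauge_le_norm 0)) // normr0 mul0r.
Qed.

Lemma gauge_set_comb a b wa wb (al be : R) : 0 <= al -> 0 <= be -> 0 < al + be ->
  gauge_set a wa -> gauge_set b wb -> gauge_set (al *: a + be *: b) (al * wa + be * wb).
Proof.
move=> al_ge0 be_ge0 albe_gt0 [wa_gt0 [ca [Cca ->]]] [wb_gt0 [cb [Ccb ->]]].
set w := al * wa + be * wb.
have w_gt0 : 0 < w.
  have [al0|al_neq0] := eqVneq al 0.
    have be_gt0 : 0 < be by lra.
    by rewrite /w al0 mul0r add0r mulr_gt0.
  have : 0 < al * wa by rewrite mulr_gt0 // lt0r al_neq0.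
  have : 0 <= be * wb by rewrite mulr_ge0 // ltW.
  rewrite /w; lra.
set l := al * wa / w.
have wl : w * l = al * wa by rewrite mulrC divfK ?gt_eqF.
have wl' : w * (1 - l) = be * wb by rewrite mulrBr mulr1 wl /w addrAC subrr add0r.
split => //; exists (l *: ca + (1 - l) *: cb); split.
  apply: C_convex => //; first by rewrite divr_ge0 ?mulr_ge0 // ltW.
  by rewrite ler_pdivrMr // mul1r lerDl mulr_ge0 // ltW.
by rewrite scalerDr !scalerA wl wl'.
Qed.

Lemma gauge_le_comb a b (al be : R) : 0 <= al -> 0 <= be ->
  gauge C (al *: a + be *: b) <= al * gauge C a + be * gauge C b.
Proof.
move=> al_ge0 be_ge0; have [albe0|albe_neq0] := eqVneq (al + be) 0.
  have [-> ->] : al = 0 /\ be = 0 by split; lra.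
  by rewrite !scale0r !mul0r addr0 gauge0.
have albe_gt0 : 0 < al + be by rewrite lt0r albe_neq0 addr_ge0.
apply/ler_addgt0Pr => e e_gt0.
have e'_gt0 : 0 < e / (al + be) by rewrite divr_gt0.
have [wa Swa wa_lt] := inf_adherent e'_gt0 (has_inf_gauge_set a).
have [wb Swb wb_lt] := inf_adherent e'_gt0 (has_inf_gauge_set b).
apply: (le_trans (gauge_le (gauge_set_comb al_ge0 be_ge0 albe_gt0 Swa Swb))).
have -> : e = (al + be) * (e / (al + be)) by rewrite mulrC divfK ?gt_eqF.
rewrite /gauge -/(gauge_set a) -/(gauge_set b); nra.
Qed.

Lemma gauge_lipschitz a b : `|gauge C a - gauge C b| <= r^-1 * `|a - b|.
Proof.
have gaugeD u v : gauge C (u + v) <= gauge C u + gauge C v.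
  by have := gauge_le_comb u v ler01 ler01; rewrite !scale1r !mul1r.
have ga_le := gaugeD b (a - b); rewrite addrCA subrr addr0 in ga_le.
have gb_le := gaugeD a (b - a); rewrite addrCA subrr addr0 in gb_le.
have gab_le := gauge_le_norm (a - b); have gba_le := gauge_le_norm (b - a).
rewrite distrC in gba_le; rewrite ler_norml mulrC; apply/andP; split; lra.
Qed.

Lemma gauge_continuous : continuous (gauge C).
Proof. by apply: (lipschitz_continuous _ gauge_lipschitz); rewrite invr_gt0. Qed.

Lemma gauge_prox_nonexpansive (t : R) y1 y2 : 0 <= t ->
  enorm (prox (fun z => t * gauge C z) y1 - prox (fun z => t * gauge C z) y2)
  <= enorm (y1 - y2).
Proof.
move=> t_ge0; apply: prox_nonexpansive => [p w s s_ge0 s_le1|y].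
  rewrite mulrCA [s * _]mulrCA -mulrDr ler_wpM2l //.
  by apply: gauge_le_comb; rewrite ?subr_ge0.
apply: prox_obj_has_min => [x|z]; last by rewrite mulr_ge0 ?gauge_ge0.
by apply: continuousM; [exact: cst_continuous | exact: gauge_continuous].
Qed.

End Gauge.

Lemma interior0_ball (R : realType) n (C : set 'rV[R]_n) : interior C 0 ->
  exists2 r : R, 0 < r & forall x, `|x| < r -> C x.
Proof.
move=> /nbhs_normP[r r_gt0 Cr]; exists r => // x x_lt; apply: Cr.
by rewrite /= sub0r normrN.
Qed.

Lemma enorm_foldr_sub_le (R : realType) n (I : Type) (F G : I -> 'rV[R]_n -> 'rV[R]_n)
    (e : I -> R) (y : 'rV[R]_n) (s : seq I) :
  (forall i a b, enorm (F i a - F i b) <= enorm (a - b)) ->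
  (forall i a, enorm (F i a - G i a) <= e i) ->
  enorm (foldr F y s - foldr G y s) <= \sum_(i <- s) e i.
Proof.
move=> F_nonexp FG_le; elim: s => [|i s IHs] /=; first by rewrite subrr enorm0 big_nil.
set a := foldr F y s; set b := foldr G y s.
have -> : F i a - G i b = (F i b - G i b) + (F i a - F i b).
  by rewrite [RHS]addrC addrA subrK.
rewrite big_cons; apply: (le_trans (ler_enormD _ _)); apply: lerD => //.
exact: le_trans (F_nonexp _ _ _) IHs.
Qed.

Lemma sum_abs_le_sqrt_enorm (R : realType) m (d : 'rV[R]_m) :
  \sum_(i < m) `|d ord0 i| <= Num.sqrt m%:R * enorm d.
Proof.
have := edot_le_enormM (\row_i `|d ord0 i|) (const_mx 1).
have -> : edot (\row_i `|d ord0 i|) (const_mx 1) = \sum_(i < m) `|d ord0 i|.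
  by apply: eq_bigr => i _; rewrite !mxE mulr1.
have -> : enorm (\row_i `|d ord0 i|) = enorm d.
  by congr Num.sqrt; apply: eq_bigr => i _; rewrite mxE real_normK // num_real.
have -> : enorm (const_mx 1 : 'rV[R]_m) = Num.sqrt m%:R.
  congr Num.sqrt; rewrite (eq_bigr (fun=> 1)) ?sumr_const ?card_ord //.
  by move=> i _; rewrite mxE expr1n.
by rewrite mulrC.
Qed.

Theorem corollary5 (R : realType) (P m : nat) (C : 'I_m -> set 'rV[R]_P)
  (L : 'I_m -> R)
  (hcomp : forall i, compact (C i))
  (hconv : forall i, convex_set_of (C i))
  (hint : forall i, interior (C i) 0)
  (hLpos : forall i, 0 < L i)
  (hL : forall i (t t' : R) (y : 'rV[R]_P), 0 < t -> 0 < t' ->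
     enorm (prox (fun z => t * gauge (C i) z) y - prox (fun z => t' * gauge (C i) z) y)
       <= L i * `|t - t'|)
  (th th' : 'rV[R]_m) (hth : forall i, 0 < th ord0 i) (hth' : forall i, 0 < th' ord0 i)
  (y : 'rV[R]_P) :
  enorm (comp_prox (fun i => gauge (C i)) (fun i => th ord0 i) y
         - comp_prox (fun i => gauge (C i)) (fun i => th' ord0 i) y)
  <= Num.sqrt (m%:R) * (\big[Num.max/0]_(i < m) L i) * enorm (th - th').
Proof.
set M := \big[Num.max/0]_(i < m) L i.
have prox_nonexp i a b : enorm (prox (fun z => th ord0 i * gauge (C i) z) a
    - prox (fun z => th ord0 i * gauge (C i) z) b) <= enorm (a - b).
  have [r r_gt0 Cr] := interior0_ball (hint i).
  exact (gauge_prox_nonexpansive (hconv i) r_gt0 Cr a b (ltW (hth i))).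
apply: (le_trans (enorm_foldr_sub_le
  (e := fun i => L i * `|th ord0 i - th' ord0 i|) y _ prox_nonexp _)) => [i a|].
  exact: hL.
rewrite big_enum /= -mulrA mulrCA.
apply: (le_trans (y := M * \sum_(i < m) `|(th - th') ord0 i|)).
  rewrite mulr_sumr; apply: ler_sum => i _.
  by rewrite !mxE ler_wpM2r ?le_bigmax.
by rewrite ler_wpM2l ?bigmax_ge_id ?sum_abs_le_sqrt_enorm.
Qed.
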